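(* Let $\mathcal{G}$ be an MVPP optional-grabbing pawn game with pawns $[d]$, let $v\in V$ with $v\in V_j$, let $P\subseteq[d]$, and let $j'\in[d]$ with $j'\neq j$. If Player 1 wins from $\langle v,P\cup\{j'\}\rangle$, then Player 1 wins from $\langle v,P\rangle$. Dually, if Player 2 wins from $\langle v,P\setminus\{j'\}\rangle$, then Player 2 wins from $\langle v,P\rangle$. (In words: when a player has the option to grab after the opponent moves the token to $v$, grabbing a pawn other than the one owning $v$ is never better than not grabbing.)
   Context: A pawn game with $d$ pawns consists of a finite directed graph $(V,E)$, a target set $T\subseteq V$, and sets $V_1,\dots,V_d$ partitioning $V$ (MVPP), where Pawn $j$ owns the vertices in $V_j$. A configuration is $\langle v,P\rangle$: token on $v$, Player 1 controls pawns $P\subseteq[d]$, Player 2 controls the rest. At $\langle v,P\rangle$, Player 1 moves the token along an edge iff he controls the pawn owning $v$; otherwise Player 2 moves. Under optional grabbing, after Player $i$ moves, the other player may either leave pawn control unchanged or take one pawn currently controlled by Player $i$. Player 1 wins a play iff it visits $T$, otherwise Player 2 wins; winning from a configuration means having a strategy that wins against all opponent strategies. *)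

From mathcomp Require Import all_boot.
Set Implicit Arguments. Unset Strict Implicit. Unset Printing Implicit Defensive.

Section PawnGame.
(* Pawns are 'I_d; [own x] is the unique pawn j with x \in V_j (MVPP). *)
Variables (d : nat) (V : finType) (E : rel V) (own : V -> 'I_d) (T : {set V}).

(* configuration <v, P> : token on v, Player 1 controls the pawns in P *)
Definition config := (V * {set 'I_d})%type.

Definition p1_moves (c : config) : bool := own c.1 \in c.2.

(* A strategy (for either player) maps the history c_0 ... c_i (current
   configuration last) to a successor vertex when the player moves, and,
   when the opponent moved the token to u, to the new set of pawns
   controlled by Player 1 (the grabbing decision). *)
Record strategy := Strategy {
  smove : seq config -> V;
  sgrab : seq config -> V -> {set 'I_d} }.

Definition grab2_ok (P P' : {set 'I_d}) : Prop :=
  P' = P \/ exists2 j, j \in P & P' = P :\ j.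
Definition grab1_ok (P P' : {set 'I_d}) : Prop :=
  P' = P \/ exists2 j, j \notin P & P' = j |: P.

Definition legal1 (s : strategy) : Prop :=
  (forall x h, let c := last x h in p1_moves c -> E c.1 (smove s (x :: h))) /\
  (forall x h u, let c := last x h in ~~ p1_moves c -> E c.1 u ->
     grab1_ok c.2 (sgrab s (x :: h) u)).

Definition legal2 (s : strategy) : Prop :=
  (forall x h, let c := last x h in ~~ p1_moves c -> E c.1 (smove s (x :: h))) /\
  (forall x h u, let c := last x h in p1_moves c -> E c.1 u ->
     grab2_ok c.2 (sgrab s (x :: h) u)).

Definition next (s1 s2 : strategy) (c0 : config) (h : seq config) : config :=
  let c := last c0 h in
  if p1_moves c then let u := smove s1 h in (u, sgrab s2 h u)
  else let u := smove s2 h in (u, sgrab s1 h u).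

(* history of the first n+1 configurations of the outcome play *)
Fixpoint hist (s1 s2 : strategy) (c0 : config) (n : nat) : seq config :=
  match n with
  | 0 => [:: c0]
  | n'.+1 => let h := hist s1 s2 c0 n' in rcons h (next s1 s2 c0 h)
  end.

Definition play (s1 s2 : strategy) (c0 : config) (n : nat) : config :=
  last c0 (hist s1 s2 c0 n).

Definition wins1 (c0 : config) : Prop :=
  exists2 s1, legal1 s1 &
    forall s2, legal2 s2 -> exists n, (play s1 s2 c0 n).1 \in T.

Definition wins2 (c0 : config) : Prop :=
  exists2 s2, legal2 s2 &
    forall s1, legal1 s1 -> forall n, (play s1 s2 c0 n).1 \notin T.

End PawnGame.

From Pilot Require Import Defs.
From mathcomp Require Import all_boot.
Set Implicit Arguments. Unset Strict Implicit. Unset Printing Implicit Defensive.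

(* Player 1, playing from <v, R>, simulates a strategy s1 for <v, Q>, where Q
   is R plus at most one pawn j.  Invariant: both tokens are on the same
   vertex, whose owner is not j, so the same player moves in both games.
   Real Player 2's grabs are copied into the simulated game, except that when
   the token enters a vertex of j the simulated Player 2 grabs j instead;
   simulated Player 1's grabs are answered by a real grab that restores the
   invariant.  Every real play is thus the vertex sequence of a play
   consistent with s1.  Exchanging the players, which complements the control
   sets, gives the statement for Player 2. *)

Section Near.
Variable T : finType.
Implicit Types (A B C Q R : {set T}) (x k : T).

Definition near A B := (A \subset B) && (#|B :\: A| <= 1).

Lemma nearP A B : reflect (B = A \/ exists2 x, x \notin A & B = x |: A) (near A B).
Proof.
apply: (iffP andP) => [[sAB /card_le1_eqP D1] | [-> | [x xA ->]]].
- have [/eqP D0 | [x xD]] := set_0Vmem (B :\: A).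
    by left; apply/eqP; rewrite eqEsubset sAB andbT -setD_eq0 D0.
  right; exists x; first by move: xD; rewrite inE => /andP[].
  apply/setP=> z; rewrite !inE; have [-> | nzx] := eqVneq z x.
    by move: xD; rewrite inE => /andP[_ ->].
  by case: (boolP (z \in A)) => [/(subsetP sAB)-> | zA] //=; apply/negP => zB;
    move: nzx; rewrite (D1 z x) ?eqxx // inE ?zA.
- by rewrite setDv cards0.
- split; first exact: subsetUr.
  rewrite -(cards1 x) subset_leq_card //.
  by apply/subsetP => z; rewrite !inE => /andP[/negbTE-> /orP[]].
Qed.

Lemma near_refl A : near A A.
Proof. by apply/nearP; left. Qed.

Lemma near_setU1 A x : near A (x |: A).
Proof.
rewrite /near subsetUr -(cards1 x) subset_leq_card //.
by apply/subsetP => z; rewrite !inE => /andP[/negbTE-> /orP[]].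
Qed.

Lemma near_setD1 A x : near (A :\ x) A.
Proof.
rewrite /near subsetDl -(cards1 x) subset_leq_card //.
by apply/subsetP => z; rewrite !inE => /andP[/nandP[/negbNE-> | /negbTE->]].
Qed.

Lemma setDCC A B : ~: A :\: ~: B = B :\: A.
Proof. by rewrite !setDE setCK setIC. Qed.

Lemma near_setC A B : near (~: A) (~: B) = near B A.
Proof. by rewrite /near setCS setDCC. Qed.

Definition grab2_sim Q R R' k := if k \in Q :\: R then R else R' :|: (Q :\: R).

Lemma grab2_sim_spec Q R R' k : near R Q -> near R' R ->
  let Q' := grab2_sim Q R R' k in [/\ near Q' Q, near R' Q' & k \notin Q' :\: R'].
Proof.
move=> nRQ nR'R; have /andP[sRQ QR1] := nRQ; have /andP[sR'R RR'1] := nR'R.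
rewrite /grab2_sim; case: ifPn => [kQR | kQR]; split; rewrite // /near.
- by rewrite inE; move: kQR; rewrite inE => /andP[/negbTE->]; rewrite andbF.
- have -> : Q :\: (R' :|: Q :\: R) = R :\: R'.
    apply/setP=> z; rewrite !inE; have := subsetP sRQ z; have := subsetP sR'R z.
    by case: (z \in Q) (z \in R) (z \in R') => [] [] [] // _ /(_ isT).
  by rewrite RR'1 subUset subsetDl (subset_trans sR'R sRQ).
- have eD : (R' :|: Q :\: R) :\: R' = Q :\: R.
    apply/setP=> z; rewrite !inE; have := subsetP sR'R z.
    by case: (z \in Q) (z \in R) (z \in R') => [] [] [] // /(_ isT).
  by rewrite eD QR1 subsetUl.
- by rewrite setDUl setDv set0U inE negb_and kQR orbT.
Qed.

Lemma card_near_near A B C : near A B -> near B C -> #|C :\: A| <= 2.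
Proof.
move=> /andP[sAB AB1] /andP[sBC BC1]; apply: leq_trans (leq_add BC1 AB1).
apply: leq_trans (leq_card_setU _ _).1; apply/subset_leq_card/subsetP => z.
rewrite !inE.
by case: (z \in B); rewrite /= ?andbT ?andbF ?orbF => /andP[].
Qed.

Definition grab1_sim R Q' k :=
  if k \in Q' :\: R then k |: R
  else if [pick z in Q' :\: R] is Some z then z |: R else R.

Lemma near_grab1_sim R Q' k : near R (grab1_sim R Q' k).
Proof.
rewrite /grab1_sim; case: ifP => _; first exact: near_setU1.
by case: pickP => [z _ | _]; [exact: near_setU1 | exact: near_refl].
Qed.

Lemma grab1_sim_spec R Q Q' k : near R Q -> near Q Q' ->
  let R' := grab1_sim R Q' k in near R' Q' /\ k \notin Q' :\: R'.
Proof.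
move=> nRQ nQQ'; have QR2 := card_near_near nRQ nQQ'.
have sRQ' : R \subset Q' by apply: subset_trans (proj1 (andP nRQ)) (proj1 (andP nQQ')).
have add z : z \in Q' :\: R -> near (z |: R) Q' /\ Q' :\: (z |: R) = (Q' :\: R) :\ z.
  move=> zD; have eD : Q' :\: (z |: R) = (Q' :\: R) :\ z.
    by apply/setP => y; rewrite !inE negb_or -andbA.
  have zQ' : z \in Q' by move: zD; rewrite inE => /andP[].
  split=> //; rewrite /near eD subUset sub1set sRQ' zQ' -ltnS.
  by move: QR2; rewrite (cardsD1 z) zD.
rewrite /grab1_sim; case: ifPn => [kD | kD].
  by have [nk ->] := add k kD; rewrite setD11.
case: pickP => [z zD | D0].
  by have [nz ->] := add z zD; rewrite inE negb_and kD orbT.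
have D0' : Q' :\: R = set0 by apply/setP => z; rewrite D0 inE.
by rewrite /near D0' sRQ' cards0 inE.
Qed.
End Near.

Section Legality.
Variables (d : nat) (V : finType) (E : rel V) (own : V -> 'I_d).
Local Notation config := (config d V).
Local Notation strategy := (strategy d V).
Implicit Types (P : {set 'I_d}) (s : strategy) (h : seq config).

Lemma grab1_okP P P' : reflect (grab1_ok P P') (near P P').
Proof. exact: nearP. Qed.

Lemma grab2_okP P P' : reflect (grab2_ok P P') (near P' P).
Proof.
apply: (iffP (nearP _ _)) => [[-> | [j jP' ->]] | [-> | [j jP ->]]];
  [by left | | by left | ].
  by right; exists j; rewrite ?setU11 ?setU1K.
by right; exists j; rewrite ?setD11 ?setD1K.
Qed.

Lemma legal1_move s (c0 : config) h : legal1 E own s -> 0 < size h ->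
  p1_moves own (last c0 h) -> E (last c0 h).1 (smove s h).
Proof. by case: h => // x h [legal_move _] _ /=; apply: legal_move. Qed.

Lemma legal1_grab s (c0 : config) h u : legal1 E own s -> 0 < size h ->
  ~~ p1_moves own (last c0 h) -> E (last c0 h).1 u -> near (last c0 h).2 (sgrab s h u).
Proof. by case: h => // x h [_ legal_grab] _ /= p1 Eu; apply/grab1_okP/legal_grab. Qed.

Lemma legal2_move s (c0 : config) h : legal2 E own s -> 0 < size h ->
  ~~ p1_moves own (last c0 h) -> E (last c0 h).1 (smove s h).
Proof. by case: h => // x h [legal_move _] _ /=; apply: legal_move. Qed.

Lemma legal2_grab s (c0 : config) h u : legal2 E own s -> 0 < size h ->
  p1_moves own (last c0 h) -> E (last c0 h).1 u -> near (sgrab s h u) (last c0 h).2.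
Proof. by case: h => // x h [_ legal_grab] _ /= p1 Eu; apply/grab2_okP/legal_grab. Qed.
End Legality.

Section Simulation.
Variables (d : nat) (V : finType) (E : rel V) (own : V -> 'I_d).
Hypothesis no_dead_end : forall x, exists y, E x y.
Local Notation config := (config d V).
Local Notation strategy := (strategy d V).

Lemma size_hist s1 s2 (c0 : config) n : size (hist own s1 s2 c0 n) = n.+1.
Proof. by elim: n => //= n IH; rewrite size_rcons IH. Qed.

Definition coupled (cr cv : config) :=
  [&& cr.1 == cv.1, near cr.2 cv.2 & own cr.1 \notin cv.2 :\: cr.2].

Lemma coupled_p1_moves cr cv : coupled cr cv -> p1_moves own cv = p1_moves own cr.
Proof.
rewrite /p1_moves; case/and3P => /eqP <- /andP[sRQ _] notD.
have [/(subsetP sRQ) -> // | notR] := boolP (own cr.1 \in cr.2).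
by apply/negbTE; apply: contra notD => inQ; rewrite inE notR.
Qed.

Definition succ x := odflt x [pick y | E x y].

Lemma E_succ x : E x (succ x).
Proof. by rewrite /succ; case: pickP => // noE; have [y] := no_dead_end x; rewrite noE. Qed.

Variables (v : V) (R Q : {set 'I_d}) (s1 : strategy).

Definition sim_step (hv : seq config) (c c' : config) : config :=
  (c'.1, if p1_moves own c then grab2_sim (last (v, Q) hv).2 c.2 c'.2 (own c'.1)
         else sgrab s1 hv c'.1).

Fixpoint sim_from (hv : seq config) (c : config) (rest : seq config) : seq config :=
  if rest is c' :: rest' then sim_from (rcons hv (sim_step hv c c')) c' rest' else hv.

Definition sim_hist (hr : seq config) := sim_from [:: (v, Q)] (head (v, R) hr) (behead hr).

Lemma size_sim_hist hr : 0 < size hr -> size (sim_hist hr) = size hr.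
Proof.
case: hr => // x hr _; rewrite /sim_hist /= -[(size hr).+1]/(size [:: (v, Q)] + size hr).
elim: hr [:: (v, Q)] x => [|c' hr IH] hv c /=; first by rewrite addn0.
by rewrite IH size_rcons addnS.
Qed.

Lemma sim_hist_rcons hr c' : 0 < size hr ->
  sim_hist (rcons hr c') = rcons (sim_hist hr) (sim_step (sim_hist hr) (last (v, R) hr) c').
Proof.
case: hr => // x hr _; rewrite /sim_hist /=.
by elim: hr [:: (v, Q)] x => [|c hr IH] hv x //=; rewrite IH.
Qed.

Definition sim1 : strategy := Strategy
  (fun hr => let x := (last (v, R) hr).1 in let y := smove s1 (sim_hist hr) in
     if E x y then y else succ x)
  (fun hr u => grab1_sim (last (v, R) hr).2 (sgrab s1 (sim_hist hr) u) (own u)).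

Lemma legal_sim1 : legal1 E own sim1.
Proof.
split=> [x hr /= _ | x hr u /= _ _]; last exact/grab1_okP/near_grab1_sim.
by case: ifP => // _; apply: E_succ.
Qed.

Variable s2 : strategy.
Hypotheses (legal_s1 : legal1 E own s1) (legal_s2 : legal2 E own s2).
Hypothesis coupled0 : coupled (v, R) (v, Q).

Local Notation hr n := (hist own sim1 s2 (v, R) n).

Lemma coupled_hist n : coupled (last (v, R) (hr n)) (last (v, Q) (sim_hist (hr n))).
Proof.
elim: n => // n IH; have hr_gt0 : 0 < size (hr n) by rewrite size_hist.
have hv_gt0 : 0 < size (sim_hist (hr n)) by rewrite size_sim_hist.
rewrite /= sim_hist_rcons // !last_rcons /Defs.next /sim_step.
have p1v := coupled_p1_moves IH; case/and3P: IH => /eqP eqx nRQ _.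
case: ifPn => p1r.
  set y := smove sim1 (hr n).
  have Ey : E (last (v, R) (hr n)).1 y := legal1_move legal_sim1 hr_gt0 p1r.
  have nR' := legal2_grab legal_s2 hr_gt0 p1r Ey.
  by have [_ nR'Q' notD] := grab2_sim_spec (own y) nRQ nR'; apply/and3P.
set y := smove s2 (hr n).
have Ey : E (last (v, Q) (sim_hist (hr n))).1 y.
  by rewrite -eqx; apply: legal2_move legal_s2 hr_gt0 p1r.
rewrite -p1v in p1r; have nQ' := legal1_grab legal_s1 hv_gt0 p1r Ey.
by have [nR'Q' notD] := grab1_sim_spec (own y) nRQ nQ'; apply/and3P.
Qed.

(* A simulated history of n+1 configurations can only arise from the real
   history of the first n rounds; elsewhere any legal move will do. *)
Definition sim2 : strategy := Strategy
  (fun hv => let r := hr (size hv).-1 in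
     if hv == sim_hist r then smove s2 r else succ (last (v, Q) hv).1)
  (fun hv u => let r := hr (size hv).-1 in let Qv := (last (v, Q) hv).2 in
     if hv == sim_hist r then grab2_sim Qv (last (v, R) r).2 (sgrab s2 r u) (own u)
     else Qv).

Lemma legal_sim2 : legal2 E own sim2.
Proof.
split=> [x h | x h u] /=; rewrite -[last x h]/(last (v, Q) (x :: h));
  set n := (size (x :: h)).-1; have hr_gt0 : 0 < size (hr n) by rewrite size_hist.
all: case: eqP => [-> | _]; try by [move=> *; apply: E_succ | move=> *; left].
  move: (coupled_hist n) => /[dup] /coupled_p1_moves -> /and3P[/eqP <- _ _] p2.
  exact: legal2_move legal_s2 hr_gt0 p2.
move: (coupled_hist n) => /[dup] /coupled_p1_moves -> /and3P[/eqP <- nRQ _] p1 Eu.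
have nR' := legal2_grab legal_s2 hr_gt0 p1 Eu.
by have [nQ'Q _ _] := grab2_sim_spec (own u) nRQ nR'; apply/grab2_okP.
Qed.

Lemma hist_sim n : hist own s1 sim2 (v, Q) n = sim_hist (hr n).
Proof.
elim: n => // n IH; have hr_gt0 : 0 < size (hr n) by rewrite size_hist.
have hv_gt0 : 0 < size (sim_hist (hr n)) by rewrite size_sim_hist.
rewrite /= sim_hist_rcons // IH; congr rcons.
move: (coupled_hist n) => /[dup] /coupled_p1_moves p1v /and3P[/eqP eqx _ _].
rewrite /Defs.next /sim_step /= p1v size_sim_hist // size_hist eqxx.
case: ifP => p1r //=.
by rewrite eqx (legal1_move legal_s1 hv_gt0) ?p1v.
Qed.
End Simulation.

Lemma simulate1 (d : nat) (V : finType) (E : rel V) (own : V -> 'I_d)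
    (no_dead_end : forall x, exists y, E x y) (v : V) (R Q : {set 'I_d}) s1 :
  near R Q -> own v \notin Q :\: R -> legal1 E own s1 ->
  exists2 s1', legal1 E own s1' & forall s2, legal2 E own s2 ->
    exists2 s2', legal2 E own s2' &
      forall n, (play own s1' s2 (v, R) n).1 = (play own s1 s2' (v, Q) n).1.
Proof.
move=> nRQ notD legal_s1.
have coupled0 : coupled own (v, R) (v, Q) by rewrite /coupled eqxx nRQ.
exists (sim1 E own v R Q s1); first exact: legal_sim1.
move=> s2 legal_s2; exists (sim2 E own v R Q s1 s2); first exact: legal_sim2.
move=> n; rewrite /play hist_sim //.
by case/and3P: (coupled_hist no_dead_end legal_s1 legal_s2 coupled0 n) => /eqP.
Qed.

Section Swap.
Variables (d : nat) (V : finType) (E : rel V) (own : V -> 'I_d).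
Local Notation config := (config d V).
Local Notation strategy := (strategy d V).

Definition cswap (c : config) : config := (c.1, ~: c.2).

Lemma cswapK : involutive cswap.
Proof. by case=> u P; rewrite /cswap setCK. Qed.

Lemma p1_moves_cswap c : p1_moves own (cswap c) = ~~ p1_moves own c.
Proof. by rewrite /p1_moves inE. Qed.

Definition swapped (s s' : strategy) :=
  (forall h, smove s' h = smove s (map cswap h)) /\
  (forall h u, sgrab s' h u = ~: sgrab s (map cswap h) u).

Definition swap (s : strategy) : strategy :=
  Strategy (fun h => smove s (map cswap h)) (fun h u => ~: sgrab s (map cswap h) u).

Lemma swap_swapped s : swapped s (swap s).
Proof. by []. Qed.

Lemma swapped_sym s s' : swapped s s' -> swapped s' s.
Proof.
case=> move' grab'; split=> [h | h u]; first by rewrite move' (mapK cswapK).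
by rewrite grab' (mapK cswapK) setCK.
Qed.

Lemma hist_swapped s1 s2 s1' s2' c0 n : swapped s1 s1' -> swapped s2 s2' ->
  hist own s2' s1' (cswap c0) n = map cswap (hist own s1 s2 c0 n).
Proof.
move=> [move1 grab1] [move2 grab2]; elim: n => //= n ->; rewrite map_rcons.
congr rcons; rewrite /Defs.next last_map p1_moves_cswap.
by case: p1_moves; rewrite /= ?move1 ?move2 ?grab1 ?grab2 (mapK cswapK).
Qed.

Lemma play_swapped s1 s2 s1' s2' c0 n : swapped s1 s1' -> swapped s2 s2' ->
  (play own s2' s1' (cswap c0) n).1 = (play own s1 s2 c0 n).1.
Proof. by move=> sw1 sw2; rewrite /play (hist_swapped _ _ sw1 sw2) last_map. Qed.

Lemma legal1_swap s : legal1 E own s -> legal2 E own (swap s).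
Proof.
case=> legal_move legal_grab; split=> [x h | x h u] /=.
  have := legal_move (cswap x) (map cswap h).
  by rewrite /= last_map p1_moves_cswap ?negbK; apply.
have := legal_grab (cswap x) (map cswap h) u; rewrite /= last_map p1_moves_cswap negbK.
by move=> grab p1 Eu; apply/grab2_okP; rewrite -near_setC setCK; apply/grab1_okP/grab.
Qed.

Lemma legal2_swap s : legal2 E own s -> legal1 E own (swap s).
Proof.
case=> legal_move legal_grab; split=> [x h | x h u] /=.
  have := legal_move (cswap x) (map cswap h).
  by rewrite /= last_map p1_moves_cswap ?negbK; apply.
have := legal_grab (cswap x) (map cswap h) u; rewrite /= last_map p1_moves_cswap.
by move=> grab p2 Eu; apply/grab1_okP; rewrite -near_setC setCK; apply/grab2_okP/grab.
Qed.
End Swap.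

Section Winning.
Variables (d : nat) (V : finType) (E : rel V) (own : V -> 'I_d) (T : {set V}).
Hypothesis no_dead_end : forall x, exists y, E x y.
Variable v : V.

Lemma wins1_near R Q : near R Q -> own v \notin Q :\: R ->
  wins1 E own T (v, Q) -> wins1 E own T (v, R).
Proof.
move=> nRQ notD [s1 legal_s1 win_s1].
have [s1' legal_s1' sim] := simulate1 no_dead_end nRQ notD legal_s1.
exists s1' => // s2 legal_s2; have [s2' legal_s2' same_play] := sim s2 legal_s2.
by have [n inT] := win_s1 s2' legal_s2'; exists n; rewrite same_play.
Qed.

Lemma wins2_near R Q : near Q R -> own v \notin R :\: Q ->
  wins2 E own T (v, Q) -> wins2 E own T (v, R).
Proof.
move=> nQR notD [s2 legal_s2 win_s2].
have nRQC : near (~: R) (~: Q) by rewrite near_setC.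
have notDC : own v \notin ~: Q :\: ~: R by rewrite setDCC.
have [s1' legal_s1' sim] := simulate1 no_dead_end nRQC notDC (legal2_swap legal_s2).
exists (swap s1'); first exact: legal1_swap.
move=> s1 legal_s1 n; have [s2' legal_s2' same_play] := sim _ (legal1_swap legal_s1).
rewrite -(play_swapped _ _ _ (swap_swapped s1) (swapped_sym (swap_swapped s1'))).
rewrite same_play -(play_swapped _ _ _ (swapped_sym (swap_swapped s2)) (swap_swapped s2')).
by rewrite /cswap /= setCK; apply: win_s2; apply: legal2_swap.
Qed.
End Winning.

Theorem corollary6 (d : nat) (V : finType) (E : rel V) (own : V -> 'I_d)
    (T : {set V}) (no_dead_end : forall x : V, exists y, E x y)
    (v : V) (P : {set 'I_d}) (j' : 'I_d) :
  j' != own v ->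
  (wins1 E own T (v, j' |: P) -> wins1 E own T (v, P)) /\
  (wins2 E own T (v, P :\ j') -> wins2 E own T (v, P)).
Proof.
move=> j'_own; split.
  have notD : own v \notin (j' |: P) :\: P by rewrite !inE eq_sym (negbTE j'_own) andNb.
  exact: (wins1_near (T := T) no_dead_end (near_setU1 P j') notD).
have notD : own v \notin P :\: (P :\ j') by rewrite !inE eq_sym j'_own; case: (_ \in P).
exact: (wins2_near (T := T) no_dead_end (near_setD1 P j') notD).
Qed.
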